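(* For every $n\in\{2,6,10,\dots\}$, every maximal increasing path of $f_n$ starting at the origin $(0,\dots,0)$ ends at the all-ones vertex $(1,1,\dots,1)$. Equivalently, the only local maximum of $f_n$ reachable from the origin by local search is $(1,\dots,1)$.
   Context: For $n\in\{2,6,10,\dots\}$ define polynomials $f_n$ in variables $x_1,\dots,x_n$ (evaluated on $\{0,1\}^n$) recursively. Set $f_2(x_1,x_2):=x_1+x_2$. For $n\in\{2,6,10,\dots\}$, write $\mathbf{x}=(x_1,\dots,x_n)$, $S:=\sum_{i=1}^n x_i$, let $M_n:=\max_{\{0,1\}^n} f_n-\min_{\{0,1\}^n} f_n+1$, and define $f_{n+4}(\mathbf{x},x_{n+1},x_{n+2},x_{n+3},x_{n+4}) := f_n(\mathbf{x}) - M_n n^2 x_{n+1} + M_n(n+1) S x_{n+1} - x_{n+2} - 2M_n n S x_{n+2} + 2M_n n(n+2) x_{n+1}x_{n+2} - 4 S x_{n+3} + 2x_{n+1}x_{n+3} + 2x_{n+2}x_{n+3} - 3x_{n+3} + (M_n(n-1)+4) S x_{n+4} + 6M_n n^2 x_{n+3}x_{n+4} - 5M_n n^2 x_{n+4}$. For a function $f:\{0,1\}^m\to\mathbb{R}$, an increasing path is a sequence of vertices $v_0,v_1,\dots,v_k$ of $\{0,1\}^m$ such that consecutive vertices differ in exactly one coordinate and $f(v_{j+1})>f(v_j)$ for all $j$. It is maximal if it cannot be extended, i.e. its last vertex is a local maximum (no neighbor has strictly larger value). The length of the path is $k$. *)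

From mathcomp Require Import all_boot all_order all_algebra.
Set Implicit Arguments. Unset Strict Implicit. Unset Printing Implicit Defensive.
Import Order.TTheory GRing.Theory Num.Theory.
Local Open Scope ring_scope.

(* The polynomials f_n, n = 4k+2, are indexed by k.  A point of {0,1}^n is
   encoded as a bit sequence x; coordinate x_i (1-based) is nth false x (i-1),
   read as the integer 0 or 1. *)

Definition dimn (k : nat) : nat := (4 * k + 2)%N.

Definition xi (x : seq bool) (i : nat) : int := (nth false x i.-1 : nat)%:Z.

Definition Ssum (n : nat) (x : seq bool) : int := \sum_(1 <= i < n.+1) xi x i.

Definition Mof (n : nat) (f : seq bool -> int) : int :=
  let o := f (nseq n false) in
  (\big[Num.max/o]_(v : n.-tuple bool) f v) - (\big[Num.min/o]_(v : n.-tuple bool) f v) + 1.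

Fixpoint fk (k : nat) : seq bool -> int :=
  match k with
  | O => fun x => xi x 1 + xi x 2
  | k'.+1 =>
      let n := dimn k' in
      let g := fk k' in
      let M := Mof n g in
      let nz : int := n%:Z in
      fun x =>
        let S := Ssum n x in
        let a := xi x n.+1 in
        let b := xi x n.+2 in
        let c := xi x n.+3 in
        let d := xi x n.+4 in
        g (take n x) - M * nz ^+ 2 * a + M * (nz + 1) * S * a - b
        - 2 * M * nz * S * b + 2 * M * nz * (nz + 2) * a * b
        - 4 * S * c + 2 * a * c + 2 * b * c - 3 * c
        + (M * (nz - 1) + 4) * S * d + 6 * M * nz ^+ 2 * c * d
        - 5 * M * nz ^+ 2 * d
  end.

Definition fn (k : nat) (v : (dimn k).-tuple bool) : int := fk k v.

Definition adj (m : nat) (u v : m.-tuple bool) : bool :=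
  #|[set i : 'I_m | tnth u i != tnth v i]| == 1%N.

Definition incr_step (m : nat) (f : m.-tuple bool -> int) (u v : m.-tuple bool) : bool :=
  adj u v && (f u < f v).

Definition increasing_path (m : nat) (f : m.-tuple bool -> int)
  (v0 : m.-tuple bool) (vs : seq (m.-tuple bool)) : bool :=
  path (incr_step f) v0 vs.

Definition local_max (m : nat) (f : m.-tuple bool -> int) (v : m.-tuple bool) : Prop :=
  forall w : m.-tuple bool, adj v w -> f w <= f v.

Definition maximal_increasing_path (m : nat) (f : m.-tuple bool -> int)
  (v0 : m.-tuple bool) (vs : seq (m.-tuple bool)) : Prop :=
  increasing_path f v0 vs /\ local_max f (last v0 vs).

Definition origin (m : nat) : m.-tuple bool := [tuple of nseq m false].
Definition ones (m : nat) : m.-tuple bool := [tuple of nseq m true].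

(* Write a vertex of the (n+4)-cube as x ++ p with x a vertex of the n-cube and p in {0,1}^4.
   Then f_(n+4) (x ++ p) = f_n x + g_p(S), where S is the number of ones of x and the tail
   gain g_p is affine in S.  Because M_n exceeds the whole range of f_n, a change of g_p
   always outweighs a change of f_n, so along an increasing path from the origin the tail
   can only climb 0000 -> 1000 (once x = 1...1) -> 1100 -> 1110 (once x = 0...0) -> 1111,
   and x itself can only climb (in f_n) during the phases 0000 and 1111, where g_p does not
   depend on S.  By induction on n, the vertices of this shape form a set that is closed
   under increasing steps and whose only local maximum is 1...1. *)

From mathcomp Require Import all_boot all_order all_algebra zify ring.
Set Implicit Arguments. Unset Strict Implicit. Unset Printing Implicit Defensive.
Import Order.TTheory GRing.Theory Num.Theory.
Local Open Scope ring_scope.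

Arguments dimn : simpl never.

Lemma dimnS k : dimn k.+1 = (dimn k + 4)%N.
Proof. by rewrite /dimn mulnSr addnAC. Qed.

Lemma dimn_gt1 k : (1 < dimn k)%N.
Proof. by rewrite /dimn leq_addl. Qed.

Lemma dimnS_cat k u : size u = dimn k.+1 ->
  exists2 x : seq bool, size x = dimn k & exists2 p, size p = 4 & u = x ++ p.
Proof.
move=> su; exists (take (dimn k) u); first by rewrite size_takel // su dimnS leq_addr.
by exists (drop (dimn k) u); rewrite ?cat_take_drop // size_drop su dimnS addKn.
Qed.

Lemma path_last_inv (T : Type) (e : rel T) (P : pred T) x s :
  (forall y z, P y -> e y z -> P z) -> P x -> path e x s -> P (last x s).
Proof. by move=> eP; elim: s x => //= y s IH x Px /andP [/(eP _ _ Px) /IH]. Qed.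

Lemma count_id_eq0 x : count id x = 0%N -> x = nseq (size x) false.
Proof. by elim: x => //= -[] x // IH /IH {1}->. Qed.

Definition hamming (u v : seq bool) : nat := count (fun ab => ab.1 != ab.2) (zip u v).

Lemma hamming_cat u v p q : size u = size v ->
  hamming (u ++ p) (v ++ q) = (hamming u v + hamming p q)%N.
Proof. by move=> uv; rewrite /hamming zip_cat // count_cat. Qed.

Lemma hammingii u : hamming u u = 0%N.
Proof. by elim: u => //= a u; rewrite /hamming /= eqxx. Qed.

Lemma hamming0_eq u v : size u = size v -> hamming u v = 0%N -> u = v.
Proof.
elim: u v => [|a u IH] [|b v] //= [uv]; rewrite /hamming /= => /eqP.
by rewrite addn_eq0 eqb0 negbK => /andP [/eqP -> /eqP /(IH v uv) ->].
Qed.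

Lemma hamming1_count u v : size u = size v -> hamming u v = 1%N ->
  count id v = (count id u).+1 \/ count id u = (count id v).+1.
Proof.
elim: u v => [|a u IH] [|b v] //= [uv]; rewrite -/(hamming u v).
by case: a b => [] [] /= => [/IH|[/(hamming0_eq uv)<-]|[/(hamming0_eq uv)<-]|/IH]; lia.
Qed.

Lemma exists_hamming1_pred u : (0 < count id u)%N ->
  exists2 v, size v = size u & hamming u v = 1%N /\ (count id v).+1 = count id u.
Proof.
elim: u => [|a u IH] //=; case: a => /= [_|/IH [v sv [uv cv]]].
  by exists (false :: u) => //; rewrite /hamming /= -/(hamming u u) hammingii.
by exists (false :: v); rewrite /= ?sv // /hamming /= -/(hamming u v) uv.
Qed.

Lemma adj_hamming m (u v : m.-tuple bool) : adj u v = (hamming u v == 1%N).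
Proof.
rewrite /adj /hamming -(map_tnth_enum u) -(map_tnth_enum v) zip_map count_map.
by rewrite cardsE cardE enumT /enum_mem size_filter.
Qed.

Lemma count_id_sum (x : seq bool) : count id x = (\sum_(0 <= i < size x) nth false x i)%N.
Proof. by rewrite -sum1_count big_mkcond (big_nth false). Qed.

Lemma Ssum_cat n x p : size x = n -> Ssum n (x ++ p) = (count id x)%:Z.
Proof.
move=> <-; rewrite /Ssum big_add1 count_id_sum -natz natr_sum.
by apply: eq_big_nat => i /andP [_ ix]; rewrite /xi nth_cat ix natz.
Qed.

Lemma xi_cat n x p i : size x = n -> xi (x ++ p) (n + i.+1) = xi p i.+1.
Proof. by move=> <-; rewrite /xi addnS /= nth_cat ltnNge leq_addr addKn. Qed.

Definition Mk k : int := Mof (dimn k) (fk k).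

Definition tail_gain k (p : seq bool) (s : int) : int :=
  let M := Mk k in let N := (dimn k)%:Z in
  let a := xi p 1 in let b := xi p 2 in let c := xi p 3 in let d := xi p 4 in
  - M * N ^+ 2 * a + M * (N + 1) * s * a - b - 2 * M * N * s * b
  + 2 * M * N * (N + 2) * a * b - 4 * s * c + 2 * a * c + 2 * b * c - 3 * c
  + (M * (N - 1) + 4) * s * d + 6 * M * N ^+ 2 * c * d - 5 * M * N ^+ 2 * d.

Lemma fk_cat k x p : size x = dimn k ->
  fk k.+1 (x ++ p) = fk k x + tail_gain k p (count id x)%:Z.
Proof.
move=> sx; rewrite [fk _.+1]/=; cbv beta.
rewrite take_size_cat // Ssum_cat // -[(dimn k).+4]addn4 -[(dimn k).+3]addn3.
rewrite -[(dimn k).+2]addn2 -[(dimn k).+1]addn1 !(xi_cat _ _ sx).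
by rewrite /tail_gain /Mk; move: (Mof _ _) => M; ring.
Qed.

Lemma Mof_gt n (f : seq bool -> int) (u v : n.-tuple bool) : f u - f v < Mof n f.
Proof.
rewrite /Mof ltzD1 lerB //.
  exact: (le_bigmax _ (fun w : n.-tuple bool => f w)).
exact: (bigmin_le _ _ (fun w : n.-tuple bool => f w)).
Qed.

Lemma fk_range k u v : size u = dimn k -> size v = dimn k -> fk k u - fk k v < Mk k.
Proof. by move=> /eqP su /eqP sv; exact: (Mof_gt _ (Tuple su) (Tuple sv)). Qed.

Lemma Mk_gt0 k : 0 < Mk k.
Proof. by have := fk_range (size_nseq (dimn k) false) (size_nseq _ false); rewrite subrr. Qed.

Definition reachable_tail (head_ok : bool) (s n : nat) (p : seq bool) : bool :=
  match p with
  | [:: false; false; false; false] => head_ok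
  | [:: true; false; false; false] => s == n
  | [:: true; true; false; false] => true
  | [:: true; true; true; false] => s == 0%N
  | [:: true; true; true; true] => head_ok
  | _ => false
  end.

(* A superset of the vertices reachable from the origin by increasing paths. *)
Fixpoint reachable k : pred (seq bool) :=
  if k is k'.+1 then fun u =>
    let x := take (dimn k') u in
    reachable_tail (reachable k' x) (count id x) (dimn k') (drop (dimn k') u)
  else predT.

Lemma reachable_cat k x p : size x = dimn k ->
  reachable k.+1 (x ++ p) = reachable_tail (reachable k x) (count id x) (dimn k) p.
Proof. by move=> sx; rewrite /= take_size_cat // drop_size_cat. Qed.

Arguments reachable : simpl never.

Lemma reachable_origin k : reachable k (nseq (dimn k) false).
Proof. by elim: k => // k IH; rewrite dimnS nseqD reachable_cat ?size_nseq. Qed.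

(* With N = dimn k, M = Mk k and S = count id x, the tail gains of 0000, 1000, 1100, 1110
   and 1111 are 0, M((N+1)S - N^2), MN^2 + 4MN - 1 - M(N-1)S, MN^2 + 4MN - (M(N-1)+4)S
   and 2MN^2 + 4MN. *)
Lemma tail_step k x p q : size x = dimn k -> size q = 4 -> reachable k.+1 (x ++ p) ->
  hamming p q = 1%N -> tail_gain k p (count id x) < tail_gain k q (count id x) ->
  reachable k.+1 (x ++ q).
Proof.
move=> sx sq; rewrite !reachable_cat //.
have M_gt0 := Mk_gt0 k; have N_gt1 := dimn_gt1 k.
have S_leN := count_size id x; rewrite sx in S_leN.
have reach0 : count id x == 0%N -> reachable k x.
  by move/eqP/count_id_eq0; rewrite sx => ->; apply: reachable_origin.
case: p => [|[] [|[] [|[] [|[] []]]]] //=.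
all: case: q sq => [|[] [|[] [|[] [|[] []]]]] //= _.
all: rewrite /hamming /tail_gain /xi /= => // hx _ gain; try exact: reach0.
all: try apply/eqP; move: gain hx; rewrite ?(mulr1, mulr0, subr0, addr0).
all: move: (count id x) (dimn k) (Mk k) S_leN N_gt1 M_gt0 => S N M; clear; nia.
Qed.

Definition ascent_closed k :=
  forall u v, size u = dimn k -> size v = dimn k -> reachable k u ->
  hamming u v = 1%N -> fk k u < fk k v -> reachable k v.

Lemma head_step k x y p : ascent_closed k ->
  size x = dimn k -> size y = dimn k -> reachable k.+1 (x ++ p) ->
  hamming x y = 1%N -> fk k.+1 (x ++ p) < fk k.+1 (y ++ p) -> reachable k.+1 (y ++ p).
Proof.
move=> closed_k sx sy; rewrite !fk_cat // !reachable_cat // => reach_x xy.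
have M_gt0 := Mk_gt0 k; have N_gt1 := dimn_gt1 k.
have Sy_leN := count_size id y; rewrite sy in Sy_leN.
have range := fk_range sy sx.
have Sxy := hamming1_count (etrans sx (esym sy)) xy.
case: p reach_x => [|[] [|[] [|[] [|[] []]]]] //= reach_x; rewrite /tail_gain /xi /= => gain.
all: try by apply: (closed_k x) => //; lia.
all: exfalso; move/eqP: reach_x gain; rewrite ?(mulr1, mulr0, subr0, addr0).
all: case: Sxy; move: range M_gt0 N_gt1 Sy_leN.
all: move: (fk k x) (fk k y) (Mk k) (dimn k) (count id x) (count id y).
all: by move=> fx fy M N Sx Sy; clear; nia.
Qed.

Lemma reachable_closed k : ascent_closed k.
Proof.
elim: k => [u v *|k IH u v]; first by rewrite /reachable.
move=> /dimnS_cat [x sx [p sp ->]] /dimnS_cat [y sy [q sq ->]] reach.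
rewrite hamming_cat ?sx ?sy // => xpyq.
have [[xy pq]|[xy pq]] :
    hamming x y = 0%N /\ hamming p q = 1%N \/ hamming x y = 1%N /\ hamming p q = 0%N by lia.
- have <- : x = y by apply: hamming0_eq; rewrite ?sx ?sy.
  by rewrite !fk_cat // ltrD2l; apply: tail_step.
- have <- : p = q by apply: hamming0_eq; rewrite ?sp ?sq.
  exact: head_step.
Qed.

Definition fk_local_max k u :=
  forall v, size v = dimn k -> hamming u v = 1%N -> fk k v <= fk k u.

Definition reachable_max_top k :=
  forall u, size u = dimn k -> reachable k u -> fk_local_max k u -> u = nseq (dimn k) true.

Lemma reachable_max_topS k :
  reachable_max_top k -> reachable_max_top k.+1.
Proof.
move=> top_k u /dimnS_cat [x sx [p sp ->]]; rewrite reachable_cat // => reach_x lmax.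
have M_gt0 := Mk_gt0 k; have N_gt1 := dimn_gt1 k.
have S_leN := count_size id x; rewrite sx in S_leN.
have tail_nb q : size q = 4 -> hamming p q = 1%N ->
    tail_gain k q (count id x) <= tail_gain k p (count id x).
  move=> sq pq; have := lmax (x ++ q); rewrite !fk_cat // lerD2l; apply.
    by rewrite size_cat sx sq dimnS.
  by rewrite hamming_cat // hammingii.
have head_nb y : size y = dimn k -> hamming x y = 1%N ->
    fk k y + tail_gain k p (count id y) <= fk k x + tail_gain k p (count id x).
  move=> sy xy; rewrite -!fk_cat //; apply: lmax.
    by rewrite size_cat sy sp dimnS.
  by rewrite hamming_cat ?sx ?sy // hammingii addn0.
have top_x : reachable k x -> (forall s, tail_gain k p s = tail_gain k p 0) ->
    x = nseq (dimn k) true.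
  by move=> reach flat; apply: top_k => // y sy /(head_nb y sy); rewrite !flat lerD2r.
rewrite dimnS nseqD; clear lmax.
case: p sp reach_x tail_nb head_nb top_x => [|[] [|[] [|[] [|[] []]]]] //=
  _ reach_x tail_nb head_nb top_x.
- by rewrite top_x // => s; rewrite /tail_gain /xi /=; ring.
- exfalso; have := tail_nb [:: true; true; true; true] erefl erefl.
  rewrite /tail_gain /xi /= (eqP reach_x) ?(mulr1, mulr0, subr0, addr0).
  move: (Mk k) (dimn k) M_gt0 N_gt1 => M N; clear; nia.
- exfalso; case: (posnP (count id x)) => [S0|S_gt0].
    have := tail_nb [:: true; true; true; false] erefl erefl.
    by rewrite /tail_gain /xi /= S0 ?(mulr1, mulr0, subr0, addr0); lia.
  (* Dropping a one of the head gains M(N-1) in the tail and loses less than M in fk. *)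
  have [y sy [xy Sy]] := exists_hamming1_pred S_gt0; rewrite sx in sy.
  have := head_nb y sy xy; have := fk_range sx sy.
  rewrite /tail_gain /xi /= -Sy ?(mulr1, mulr0, subr0, addr0).
  move: (fk k x) (fk k y) (Mk k) (dimn k) (count id y) M_gt0 N_gt1 => fx fy M N S; clear; nia.
- exfalso; have := tail_nb [:: true; true; false; false] erefl erefl.
  rewrite /tail_gain /xi /= (eqP reach_x) ?(mulr1, mulr0, subr0, addr0).
  move: (Mk k) (dimn k) M_gt0 N_gt1 => M N; clear; nia.
- exfalso; have S_N : count id x = dimn k.
    by rewrite top_x // ?count_nseq ?mul1n // => s; rewrite /tail_gain /xi /=; ring.
  have := tail_nb [:: true; false; false; false] erefl erefl.
  rewrite /tail_gain /xi /= S_N ?(mulr1, mulr0, subr0, addr0).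
  move: (Mk k) (dimn k) M_gt0 N_gt1 => M N; clear; nia.
Qed.

Lemma reachable_max_top0 : reachable_max_top 0.
Proof.
move=> [|a [|b []]] // _ _ lmax; rewrite /dimn /=.
have := lmax [:: true; true] erefl; have := lmax [:: true; false] erefl.
by case: a b lmax => [] [] //= _; rewrite /hamming /xi /=; do 2? (move/(_ erefl)); lia.
Qed.

Lemma reachable_max_top_all k : reachable_max_top k.
Proof. by elim: k => [|k]; [exact: reachable_max_top0 | exact: reachable_max_topS]. Qed.

Theorem lemma2 (k : nat) (vs : seq ((dimn k).-tuple bool)) :
  maximal_increasing_path (@fn k) (origin (dimn k)) vs ->
  last (origin (dimn k)) vs = ones (dimn k).
Proof.
move=> [ascent top].
have reach_last : reachable k (last (origin (dimn k)) vs).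
  apply: (path_last_inv (P := fun v : (dimn k).-tuple bool => reachable k v)) ascent.
    move=> y z reach_y /andP [yz]; rewrite adj_hamming in yz.
    exact: (reachable_closed (size_tuple y) (size_tuple z) reach_y (eqP yz)).
  exact: reachable_origin.
apply: val_inj; apply: reachable_max_top_all reach_last _; first exact: size_tuple.
move=> v /eqP sv wv; apply: (top (Tuple sv)).
by rewrite adj_hamming wv.
Qed.
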